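(* There is a universal constant $K_2>0$ such that for all $\alpha_m>0$, $\theta\in(0,1)$ and $h,\alpha_s,\eta>0$, \[ E^{1D}_{h,\alpha_s,\eta,\theta}\le \min\left(\alpha_m\eta^2,\ \alpha_m\eta^2\theta+K_2\frac{h^2\eta}{1-\theta}\right)h . \] The first bound is attained by $u=w=0$; the second by taking $u=w=0$ on a bonded interval of length $\theta$ and a single blister with zero value of $|w_x+\frac12u_x^2-\eta|$ on the complementary interval of length $1-\theta$.
   Context: Let $\mathbb T^1=\mathbb R/\mathbb Z$. Fix parameters $\alpha_m>0$, $h>0$, $\alpha_s>0$, $\eta>0$ and $\theta\in(0,1)$. The admissible class $\mathcal A^{1D}$ consists of triples $(w,u,\Omega)$ with $w\in H^1(\mathbb T^1;\mathbb R)$, $u\in H^2(\mathbb T^1;[0,\infty))$, $\Omega\subset\mathbb T^1$ closed with Lebesgue measure $|\Omega|=\theta$, and $u=0$ on $\Omega$. The energy is \[ E^{1D}[w,u,\Omega]=\alpha_m h\int_0^1\Big|w_x+\tfrac12 u_x^2-\eta\Big|^2dx+h^3\int_0^1|u_{xx}|^2dx+\alpha_s\Big(\int_\Omega|w_x|^2dx\Big)^{1/2}\Big(\int_\Omega|w|^2dx\Big)^{1/2}, \] and $E^{1D}_{h,\alpha_s,\eta,\theta}:=\inf_{(w,u,\Omega)\in\mathcal A^{1D}}E^{1D}[w,u,\Omega]$. *)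

From Stdlib Require Import Reals Lra ClassicalEpsilon.
Open Scope R_scope.

(* Functions on T^1 = R/Z are represented as 1-periodic functions R -> R;
   subsets of T^1 as 1-periodic predicates on R. *)
Definition periodic1 (f : R -> R) : Prop := forall x, f (x + 1) = f x.
Definition periodic1_set (S : R -> Prop) : Prop := forall x, S (x + 1) <-> S x.

(* closed subset of R (hence, if 1-periodic, a closed subset of T^1) *)
Definition closed_set (S : R -> Prop) : Prop :=
  forall x, ~ S x -> exists d, 0 < d /\ forall y, Rabs (y - x) < d -> ~ S y.

Definition indic (S : R -> Prop) (x : R) : R :=
  if excluded_middle_informative (S x) then 1 else 0.

Definition int01 (f : R -> R) (I : R) : Prop :=
  exists pr : Riemann_integrable f 0 1, RiemannInt pr = I.

(* Admissible triples (regular subclass of A^{1D}):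
   w is C^1 and 1-periodic with derivative wx;
   u is C^2, 1-periodic and nonnegative with derivatives ux, uxx;
   Omega is a closed 1-periodic set whose measure (Riemann/Jordan integral of
   its indicator over one period) is theta; u = 0 on Omega. *)
Definition admissible (theta : R) (w wx u ux uxx : R -> R) (Om : R -> Prop) : Prop :=
  periodic1 w /\ periodic1 u /\
  (forall x, derivable_pt_lim w x (wx x)) /\ continuity wx /\
  (forall x, derivable_pt_lim u x (ux x)) /\
  (forall x, derivable_pt_lim ux x (uxx x)) /\ continuity uxx /\
  (forall x, 0 <= u x) /\
  periodic1_set Om /\ closed_set Om /\ int01 (indic Om) theta /\
  (forall x, Om x -> u x = 0).

Definition energy_value (am h as_ eta : R) (w wx u ux uxx : R -> R)
    (Om : R -> Prop) (E : R) : Prop :=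
  exists I1 I2 I3 I4,
    int01 (fun x => Rsqr (wx x + / 2 * Rsqr (ux x) - eta)) I1 /\
    int01 (fun x => Rsqr (uxx x)) I2 /\
    int01 (fun x => indic Om x * Rsqr (wx x)) I3 /\
    int01 (fun x => indic Om x * Rsqr (w x)) I4 /\
    E = am * h * I1 + h ^ 3 * I2 + as_ * sqrt I3 * sqrt I4.

From Stdlib Require Import Reals Lra Lia ClassicalEpsilon.
From Coquelicot Require Import Coquelicot.
Open Scope R_scope.

(* Both bounds come from explicit configurations whose bonded set is the arc of length
   theta centred at 0.  With u = w = 0 the energy is am eta^2 h.  Otherwise a single
   blister fills the complementary arc of length L = 1 - theta: in the coordinate
   t in [0, 1] along it, u = A (t (1 - t))^3 and w_x = eta (1 - (1 - 2t)^(2n)) - u_x^2/2,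
   so that w_x + u_x^2/2 - eta = - eta (1 - 2t)^(2n) contributes only L eta^2/(4n+1) to the
   membrane term.  The amplitude A is fixed by requiring w_x to have mean 0 over the
   blister (so that w is periodic), which gives A^2 = 1540 L^2 eta 2n/(2n+1) and a bending
   energy 88 h^3 eta (2n/(2n+1)) / L.  Letting n grow gives the bound with K2 = 88. *)

(* [clamp y] is the truncation [Rmax 0 (Rmin y 1)], written with [Rabs] so that
   continuity is immediate. *)
Definition clamp (y : R) : R := (Rabs y - Rabs (y - 1) + 1) / 2.

Lemma clamp_of_le0 y : y <= 0 -> clamp y = 0.
Proof. intros; unfold clamp, Rabs; repeat destruct Rcase_abs; lra. Qed.

Lemma clamp_of_ge1 y : 1 <= y -> clamp y = 1.
Proof. intros; unfold clamp, Rabs; repeat destruct Rcase_abs; lra. Qed.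

Lemma clamp_id y : 0 <= y <= 1 -> clamp y = y.
Proof. intros; unfold clamp, Rabs; repeat destruct Rcase_abs; lra. Qed.

Lemma clamp_bounds y : 0 <= clamp y <= 1.
Proof. unfold clamp, Rabs; repeat destruct Rcase_abs; lra. Qed.

Lemma continuity_clamp : continuity clamp.
Proof. unfold clamp; reg. Qed.

Lemma derivable_pt_lim_glue (f g h : R -> R) a l d : 0 < d ->
  (forall y, a - d < y <= a -> f y = g y) ->
  (forall y, a <= y < a + d -> f y = h y) ->
  derivable_pt_lim g a l -> derivable_pt_lim h a l -> derivable_pt_lim f a l.
Proof.
  intros Hd Hg Hh Dg Dh eps He.
  destruct (Dg eps He) as [d1 H1], (Dh eps He) as [d2 H2].
  assert (Hp : 0 < Rmin d (Rmin d1 d2)).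
  { apply Rmin_pos; [lra | apply Rmin_pos; apply cond_pos]. }
  exists (mkposreal _ Hp); simpl; intros e He0 Hee.
  assert (B1 := Rmin_l d (Rmin d1 d2)); assert (B2 := Rmin_r d (Rmin d1 d2)).
  assert (B3 := Rmin_l d1 d2); assert (B4 := Rmin_r d1 d2).
  assert (Ha := Rabs_def2 _ _ Hee).
  destruct (Rle_lt_dec e 0).
  - rewrite (Hg (a + e)), (Hg a) by lra. apply H1; auto; lra.
  - rewrite (Hh (a + e)), (Hh a) by lra. apply H2; auto; lra.
Qed.

Lemma derivable_pt_lim_comp_clamp (P P' : R -> R) z :
  (forall t, derivable_pt_lim P t (P' t)) -> P' 0 = 0 -> P' 1 = 0 ->
  derivable_pt_lim (fun y => P (clamp y)) z (P' (clamp z)).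
Proof.
  intros HP H0 H1.
  assert (D0 := derivable_pt_lim_const (P 0) z).
  assert (D1 := derivable_pt_lim_const (P 1) z).
  destruct (Rlt_or_le z 0) as [Hz | Hz].
  { rewrite clamp_of_le0, H0 by lra.
    apply (derivable_pt_lim_glue _ (fun _ => P 0) (fun _ => P 0) z 0 (- z)); auto;
      try lra; intros; rewrite clamp_of_le0 by lra; reflexivity. }
  destruct (Rlt_or_le 1 z) as [Hz1 | Hz1].
  { rewrite clamp_of_ge1, H1 by lra.
    apply (derivable_pt_lim_glue _ (fun _ => P 1) (fun _ => P 1) z 0 (z - 1)); auto;
      try lra; intros; rewrite clamp_of_ge1 by lra; reflexivity. }
  rewrite clamp_id by lra.
  destruct (Req_dec z 0) as [-> | N0].
  { rewrite H0.
    apply (derivable_pt_lim_glue _ (fun _ => P 0) P 0 0 1); auto; try lra; intros.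
    - rewrite clamp_of_le0 by lra; reflexivity.
    - rewrite clamp_id by lra; reflexivity.
    - rewrite <- H0 at 2; apply HP. }
  destruct (Req_dec z 1) as [-> | N1].
  { rewrite H1.
    apply (derivable_pt_lim_glue _ P (fun _ => P 1) 1 0 1); auto; try lra; intros.
    - rewrite clamp_id by lra; reflexivity.
    - rewrite clamp_of_ge1 by lra; reflexivity.
    - rewrite <- H1; apply HP. }
  assert (B := Rmin_l z (1 - z)); assert (B' := Rmin_r z (1 - z)).
  apply (derivable_pt_lim_glue _ P P z _ (Rmin z (1 - z))); auto;
    try (apply Rmin_pos; lra); intros; rewrite clamp_id by lra; reflexivity.
Qed.

Lemma frac_part_of_bounds (z : Z) y : IZR z <= y < IZR z + 1 -> frac_part y = y - IZR z.
Proof. intros Hy. symmetry. eapply proj2, (Int_part_frac_part_spec y z); [lra | ring]. Qed.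

Lemma Int_part_bounds x : IZR (Int_part x) <= x < IZR (Int_part x) + 1.
Proof. destruct (base_Int_part x). lra. Qed.

Lemma frac_part_add1 x : frac_part (x + 1) = frac_part x.
Proof.
  assert (Hx := Int_part_bounds x).
  rewrite (frac_part_of_bounds (Int_part x + 1)) by (rewrite plus_IZR; lra).
  unfold frac_part. rewrite plus_IZR. ring.
Qed.

Lemma locally_of_Rabs x d (Q : R -> Prop) :
  0 < d -> (forall y, Rabs (y - x) < d -> Q y) -> locally x Q.
Proof. intros Hd H. exists (mkposreal d Hd). exact H. Qed.

Lemma is_RInt_constR a b v : is_RInt (fun _ => v) a b ((b - a) * v).
Proof. exact (@is_RInt_const R_NormedModule a b v). Qed.

Lemma is_RInt_0 a b : is_RInt (fun _ => 0) a b 0.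
Proof. assert (H := is_RInt_constR a b 0). now rewrite Rmult_0_r in H. Qed.

Lemma is_RInt_ext_R (f g : R -> R) a b l :
  (forall x, f x = g x) -> is_RInt f a b l -> is_RInt g a b l.
Proof. intros H. apply is_RInt_ext. intros x _. apply H. Qed.

Lemma int01_of_is_RInt f I : is_RInt f 0 1 I -> int01 f I.
Proof.
  intros H. exists (ex_RInt_Reals_0 f 0 1 (ex_intro _ I H)).
  rewrite <- RInt_Reals. now apply is_RInt_unique.
Qed.

Lemma closed_set_zeros (f : R -> R) : continuity f -> closed_set (fun x => f x = 0).
Proof.
  intros Hf x Hx.
  assert (Hnz : locally (f x) (fun z => z <> 0)).
  { exists (mkposreal _ (Rabs_pos_lt _ Hx)). intros z Hz ->.
    change (Rabs (0 - f x) < Rabs (f x)) in Hz.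
    rewrite Rminus_0_l, Rabs_Ropp in Hz. lra. }
  destruct (proj1 (continuity_pt_filterlim f x) (Hf x) _ Hnz) as [d Hd].
  exists d. split; [apply cond_pos |]. intros y Hy. exact (Hd y Hy).
Qed.

(* The blister coordinate: on each period [k, k + 1] it is 0 on [k, k + theta/2],
   affine from 0 to 1 on the blister [k + theta/2, k + 1 - theta/2], and 1 on
   [k + 1 - theta/2, k + 1]; a profile [P] on [0, 1] is laid on the blister as
   [P (blister_coord theta x)]. *)
Definition blister_coord (theta x : R) : R :=
  clamp ((frac_part x - theta / 2) / (1 - theta)).

Section BlisterCoordinate.

Variable theta : R.
Hypothesis Htheta : 0 < theta < 1.

Lemma blister_coord_add1 x : blister_coord theta (x + 1) = blister_coord theta x.
Proof. unfold blister_coord. rewrite frac_part_add1. reflexivity. Qed.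

Lemma blister_coord_bounds x : 0 <= blister_coord theta x <= 1.
Proof. apply clamp_bounds. Qed.

Lemma blister_coord_locally x :
  locally x (fun y => blister_coord theta y = 0 \/ blister_coord theta y = 1) \/
  exists k, locally x (fun y =>
    blister_coord theta y = clamp ((y - k - theta / 2) / (1 - theta))).
Proof.
  set (k := IZR (Int_part x)).
  assert (Hk := Int_part_bounds x); fold k in Hk.
  destruct (Req_dec x k) as [Ex | Nx].
  - left. apply (locally_of_Rabs x (theta / 2)); [lra |].
    intros y Hy. apply Rabs_def2 in Hy. unfold blister_coord.
    destruct (Rlt_or_le y x).
    + right. rewrite (frac_part_of_bounds (Int_part x - 1)) by (rewrite minus_IZR; fold k; lra).
      rewrite minus_IZR; fold k. apply clamp_of_ge1, Rle_div_r; lra.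
    + left. rewrite (frac_part_of_bounds (Int_part x)) by (fold k; lra). fold k.
      apply clamp_of_le0, Rle_div_l; lra.
  - right. exists k.
    assert (B := Rmin_l (x - k) (k + 1 - x)); assert (B' := Rmin_r (x - k) (k + 1 - x)).
    apply (locally_of_Rabs x (Rmin (x - k) (k + 1 - x))); [apply Rmin_pos; lra |].
    intros y Hy. apply Rabs_def2 in Hy. unfold blister_coord.
    rewrite (frac_part_of_bounds (Int_part x)) by (fold k; lra). reflexivity.
Qed.

Lemma continuity_comp_blister_coord (P : R -> R) :
  continuity P -> P 0 = P 1 -> continuity (fun x => P (blister_coord theta x)).
Proof.
  intros HP E x. apply continuity_pt_filterlim.
  change (continuous (fun x => P (blister_coord theta x)) x).
  destruct (blister_coord_locally x) as [Hloc | [k Hloc]].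
  - apply (continuous_ext_loc _ (fun _ => P 0)); [| apply continuous_const].
    revert Hloc; apply filter_imp; intros y [-> | ->]; auto.
  - apply (continuous_ext_loc _ (fun y => P (clamp ((y - k - theta / 2) / (1 - theta))))).
    + revert Hloc; apply filter_imp; intros y ->. reflexivity.
    + apply continuity_pt_filterlim.
      apply (continuity_pt_comp (fun y => clamp ((y - k - theta / 2) / (1 - theta))) P);
        [| apply HP].
      apply (continuity_pt_comp (fun y => (y - k - theta / 2) / (1 - theta)) clamp);
        [reg | apply continuity_clamp]; lra.
Qed.

Lemma derivable_pt_lim_comp_blister_coord (P Q : R -> R) :
  (forall t, derivable_pt_lim P t ((1 - theta) * Q t)) ->
  Q 0 = 0 -> Q 1 = 0 -> P 0 = P 1 ->
  forall x, derivable_pt_lim (fun x => P (blister_coord theta x)) x (Q (blister_coord theta x)).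
Proof.
  intros HP Q0 Q1 E x. apply is_derive_Reals.
  destruct (blister_coord_locally x) as [Hloc | [k Hloc]].
  - (* near an integer the coordinate only takes the values 0 and 1, and P 0 = P 1 *)
    assert (Hx : Q (blister_coord theta x) = 0).
    { destruct (locally_singleton _ _ Hloc) as [-> | ->]; auto. }
    rewrite Hx. apply (is_derive_ext_loc (fun _ => P 0)).
    + revert Hloc; apply filter_imp; intros y [-> | ->]; auto.
    + apply is_derive_Reals, derivable_pt_lim_const.
  - assert (Hx := locally_singleton _ _ Hloc); simpl in Hx.
    apply (is_derive_ext_loc (fun y => P (clamp ((y - k - theta / 2) / (1 - theta))))).
    + revert Hloc; apply filter_imp; intros y ->. reflexivity.
    + rewrite Hx. apply is_derive_Reals.
      replace (Q (clamp ((x - k - theta / 2) / (1 - theta))))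
        with ((1 - theta) * Q (clamp ((x - k - theta / 2) / (1 - theta))) * / (1 - theta))
        by (field; lra).
      apply (derivable_pt_lim_comp (fun y => (y - k - theta / 2) / (1 - theta))
               (fun y => P (clamp y))).
      * apply is_derive_Reals. auto_derive; [lra | field; lra].
      * apply (derivable_pt_lim_comp_clamp P (fun t => (1 - theta) * Q t)); auto;
          [rewrite Q0 | rewrite Q1]; ring.
Qed.

Lemma is_RInt_comp_blister_coord (G : R -> R) v :
  is_RInt G 0 1 v ->
  is_RInt (fun x => G (blister_coord theta x)) 0 1
    (theta / 2 * G 0 + (1 - theta) * v + theta / 2 * G 1).
Proof.
  intros HG.
  assert (Hfrac : forall x, 0 <= x < 1 -> frac_part x = x).
  { intros x Hx. rewrite (frac_part_of_bounds 0) by lra. ring. }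
  assert (Hleft : is_RInt (fun x => G (blister_coord theta x)) 0 (theta / 2) (theta / 2 * G 0)).
  { apply (is_RInt_ext (fun _ => G 0)).
    - rewrite Rmin_left, Rmax_right by lra. intros x Hx. unfold blister_coord.
      rewrite Hfrac, clamp_of_le0 by (try apply Rle_div_l; lra). reflexivity.
    - replace (theta / 2 * G 0) with ((theta / 2 - 0) * G 0) by ring. apply is_RInt_constR. }
  assert (Hright : is_RInt (fun x => G (blister_coord theta x)) (1 - theta / 2) 1
                     (theta / 2 * G 1)).
  { apply (is_RInt_ext (fun _ => G 1)).
    - rewrite Rmin_left, Rmax_right by lra. intros x Hx. unfold blister_coord.
      rewrite Hfrac, clamp_of_ge1 by (try apply Rle_div_r; lra). reflexivity.
    - replace (theta / 2 * G 1) with ((1 - (1 - theta / 2)) * G 1) by ring.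
      apply is_RInt_constR. }
  assert (Hmid : is_RInt (fun x => G (blister_coord theta x)) (theta / 2) (1 - theta / 2)
                   ((1 - theta) * v)).
  { set (s := / (1 - theta)); set (o := - (theta / 2) / (1 - theta)).
    assert (Hlin : is_RInt G (s * (theta / 2) + o) (s * (1 - theta / 2) + o) v).
    { replace (s * (theta / 2) + o) with 0 by (unfold s, o; field; lra).
      replace (s * (1 - theta / 2) + o) with 1 by (unfold s, o; field; lra). exact HG. }
    apply (is_RInt_scal _ _ _ (1 - theta)), is_RInt_comp_lin in Hlin.
    revert Hlin; apply is_RInt_ext.
    rewrite Rmin_left, Rmax_right by lra. intros x Hx. unfold blister_coord.
    assert (Hin : 0 <= (x - theta / 2) / (1 - theta) <= 1).
    { split; [apply Rdiv_le_0_compat | apply Rle_div_l]; lra. }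
    rewrite Hfrac, (clamp_id _ Hin) by lra.
    unfold scal; simpl; unfold mult; simpl.
    replace (s * x + o) with ((x - theta / 2) / (1 - theta)) by (unfold s, o; field; lra).
    unfold s; field; lra. }
  exact (is_RInt_Chasles _ _ _ _ _ _ (is_RInt_Chasles _ _ _ _ _ _ Hleft Hmid) Hright).
Qed.

Definition bonded (x : R) : Prop :=
  blister_coord theta x * (1 - blister_coord theta x) = 0.

Lemma bonded_spec :
  periodic1_set bonded /\ closed_set bonded /\ int01 (indic bonded) theta.
Proof.
  split; [| split].
  - intros x. unfold bonded. rewrite blister_coord_add1. tauto.
  - apply closed_set_zeros, (continuity_comp_blister_coord (fun t => t * (1 - t)));
      [reg | ring].
  - apply int01_of_is_RInt.
    set (G := indic (fun t => t * (1 - t) = 0)).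
    assert (G01 : G 0 = 1 /\ G 1 = 1).
    { unfold G, indic.
      split; destruct excluded_middle_informative as [_ | N]; auto; exfalso; apply N; ring. }
    assert (HG : is_RInt G 0 1 0).
    { apply (is_RInt_ext (fun _ => 0)); [| apply is_RInt_0].
      rewrite Rmin_left, Rmax_right by lra. intros t Ht. unfold G, indic.
      destruct excluded_middle_informative; [nra | reflexivity]. }
    assert (H := is_RInt_comp_blister_coord G 0 HG).
    destruct G01 as [G0 G1]; rewrite G0, G1 in H.
    replace theta with (theta / 2 * 1 + (1 - theta) * 0 + theta / 2 * 1) by field.
    exact H.
Qed.

Lemma indic_bonded_mul_vanishing (F : R -> R) x :
  F 0 = 0 -> F 1 = 0 -> indic bonded x * Rsqr (F (blister_coord theta x)) = 0.
Proof.
  intros F0 F1. unfold indic. destruct excluded_middle_informative as [B | _]; [| ring].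
  destruct (Rmult_integral _ _ B) as [-> | E].
  - rewrite F0. unfold Rsqr. ring.
  - replace (blister_coord theta x) with 1 by lra. rewrite F1. unfold Rsqr. ring.
Qed.

End BlisterCoordinate.

Definition vanishes_at_ends (F : R -> R) : Prop := F 0 = 0 /\ F 1 = 0.

Section LaidProfiles.

Variables (theta : R) (W Wx U Ux Uxx : R -> R).
Hypothesis Htheta : 0 < theta < 1.
Hypotheses (W_ends : vanishes_at_ends W) (Wx_ends : vanishes_at_ends Wx)
  (U_ends : vanishes_at_ends U) (Ux_ends : vanishes_at_ends Ux)
  (Uxx_ends : vanishes_at_ends Uxx).
Hypotheses (W_deriv : forall t, derivable_pt_lim W t ((1 - theta) * Wx t))
  (U_deriv : forall t, derivable_pt_lim U t ((1 - theta) * Ux t))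
  (Ux_deriv : forall t, derivable_pt_lim Ux t ((1 - theta) * Uxx t))
  (Wx_cont : continuity Wx) (Uxx_cont : continuity Uxx)
  (U_nonneg : forall t, 0 <= t <= 1 -> 0 <= U t).

Lemma admissible_laid_profiles :
  admissible theta (fun x => W (blister_coord theta x)) (fun x => Wx (blister_coord theta x))
    (fun x => U (blister_coord theta x)) (fun x => Ux (blister_coord theta x))
    (fun x => Uxx (blister_coord theta x)) (bonded theta).
Proof.
  destruct W_ends as [W0 W1], Wx_ends as [Wx0 Wx1], U_ends as [U0 U1],
    Ux_ends as [Ux0 Ux1], Uxx_ends as [Uxx0 Uxx1].
  destruct (bonded_spec theta Htheta) as (Bper & Bclosed & Bmeas).
  unfold admissible; repeat match goal with |- _ /\ _ => split end; auto.
  - intros x. now rewrite blister_coord_add1.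
  - intros x. now rewrite blister_coord_add1.
  - apply derivable_pt_lim_comp_blister_coord; auto; congruence.
  - apply continuity_comp_blister_coord; auto; congruence.
  - apply derivable_pt_lim_comp_blister_coord; auto; congruence.
  - apply derivable_pt_lim_comp_blister_coord; auto; congruence.
  - apply continuity_comp_blister_coord; auto; congruence.
  - intros x. apply U_nonneg, blister_coord_bounds.
  - intros x Hx. destruct (Rmult_integral _ _ Hx) as [-> | E]; auto.
    now replace (blister_coord theta x) with 1 by lra.
Qed.

Lemma energy_value_laid_profiles am h as_ eta v1 v2 :
  is_RInt (fun t => Rsqr (Wx t + / 2 * Rsqr (Ux t) - eta)) 0 1 v1 ->
  is_RInt (fun t => Rsqr (Uxx t)) 0 1 v2 ->
  energy_value am h as_ eta (fun x => W (blister_coord theta x))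
    (fun x => Wx (blister_coord theta x)) (fun x => U (blister_coord theta x))
    (fun x => Ux (blister_coord theta x)) (fun x => Uxx (blister_coord theta x)) (bonded theta)
    (am * h * (theta * eta ^ 2 + (1 - theta) * v1) + h ^ 3 * ((1 - theta) * v2)).
Proof.
  intros Hv1 Hv2.
  destruct W_ends as [W0 W1], Wx_ends as [Wx0 Wx1], Ux_ends as [Ux0 Ux1],
    Uxx_ends as [Uxx0 Uxx1].
  assert (Hzero : forall f : R -> R, (forall x, f x = 0) -> int01 f 0).
  { intros f Hf. apply int01_of_is_RInt, (is_RInt_ext_R (fun _ => 0)), is_RInt_0.
    intros x. now rewrite Hf. }
  exists (theta / 2 * eta ^ 2 + (1 - theta) * v1 + theta / 2 * eta ^ 2),
    (theta / 2 * 0 + (1 - theta) * v2 + theta / 2 * 0), 0, 0.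
  repeat split.
  - apply int01_of_is_RInt.
    apply (is_RInt_comp_blister_coord theta Htheta
             (fun t => Rsqr (Wx t + / 2 * Rsqr (Ux t) - eta))) in Hv1.
    rewrite Wx0, Wx1, Ux0, Ux1 in Hv1. revert Hv1; unfold Rsqr.
    replace ((0 + / 2 * (0 * 0) - eta) * (0 + / 2 * (0 * 0) - eta)) with (eta ^ 2) by ring.
    trivial.
  - apply int01_of_is_RInt.
    apply (is_RInt_comp_blister_coord theta Htheta (fun t => Rsqr (Uxx t))) in Hv2.
    rewrite Uxx0, Uxx1, Rsqr_0 in Hv2. exact Hv2.
  - apply Hzero. intros x. now apply indic_bonded_mul_vanishing.
  - apply Hzero. intros x. now apply indic_bonded_mul_vanishing.
  - rewrite sqrt_0. field.
Qed.

End LaidProfiles.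

Definition blister_u (A t : R) : R := A * (t * (1 - t)) ^ 3.
Definition blister_ux (A L t : R) : R := 3 * A * (t * (1 - t)) ^ 2 * (1 - 2 * t) / L.
Definition blister_uxx (A L t : R) : R :=
  A * (6 * t - 36 * t ^ 2 + 60 * t ^ 3 - 30 * t ^ 4) / (L * L).

Definition cutoff (n : nat) (t : R) : R := 1 - (1 - 2 * t) ^ (2 * n).
Definition cutoff_primitive (n : nat) (t : R) : R :=
  t + ((1 - 2 * t) ^ S (2 * n) - 1) / (2 * (2 * INR n + 1)).

(* Up to the factor [(3 A / L)^2], a primitive of [blister_ux A L t ^ 2]. *)
Definition ux_sq_primitive (t : R) : R :=
  t ^ 5 / 5 - 4 * t ^ 6 / 3 + 26 * t ^ 7 / 7 - 11 * t ^ 8 / 2 + 41 * t ^ 9 / 9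
  - 2 * t ^ 10 + 4 * t ^ 11 / 11.

Definition blister_wx (eta : R) (n : nat) (A L t : R) : R :=
  eta * cutoff n t - / 2 * Rsqr (blister_ux A L t).
Definition blister_w (eta : R) (n : nat) (A L t : R) : R :=
  L * eta * cutoff_primitive n t - 9 * A ^ 2 * ux_sq_primitive t / (2 * L).

(* The amplitude for which [blister_w] returns to 0 at [t = 1], i.e. [w_x] has mean 0 over
   the blister: [L eta (2n/(2n+1)) = 9 A^2 / (2 L 6930)], with [6930 = 1 / ux_sq_primitive 1]. *)
Definition blister_amplitude (eta : R) (n : nat) (L : R) : R :=
  sqrt (1540 * L ^ 2 * eta * (2 * INR n / (2 * INR n + 1))).

Section BlisterProfiles.

Variables (eta A L : R) (n : nat).
Hypothesis HL : L <> 0.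

Lemma derivable_blister_u t : derivable_pt_lim (blister_u A) t (L * blister_ux A L t).
Proof. apply is_derive_Reals. unfold blister_u, blister_ux. auto_derive; auto. field; auto. Qed.

Lemma derivable_blister_ux t :
  derivable_pt_lim (blister_ux A L) t (L * blister_uxx A L t).
Proof.
  apply is_derive_Reals. unfold blister_ux, blister_uxx. auto_derive; auto. field; auto.
Qed.

Lemma derivable_cutoff_primitive t : derivable_pt_lim (cutoff_primitive n) t (cutoff n t).
Proof.
  apply is_derive_Reals. unfold cutoff_primitive, cutoff.
  replace (INR n) with (INR (S (2 * n)) / 2 - / 2) by (rewrite S_INR, mult_INR; simpl; field).
  assert (Hpos : 0 < INR (S (2 * n))) by (apply lt_0_INR; lia).
  remember (S (2 * n)) as m eqn:Hm.
  auto_derive; [easy |].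
  replace (Init.Nat.pred m) with (2 * n)%nat by (subst; reflexivity).
  replace (1 + - (2 * t)) with (1 - 2 * t) by ring.
  field. lra.
Qed.

Lemma derivable_ux_sq_primitive t :
  derivable_pt_lim ux_sq_primitive t ((t * (1 - t)) ^ 4 * (1 - 2 * t) ^ 2).
Proof. apply is_derive_Reals. unfold ux_sq_primitive. auto_derive; auto. field. Qed.

Lemma derivable_blister_w t :
  derivable_pt_lim (blister_w eta n A L) t (L * blister_wx eta n A L t).
Proof.
  replace (L * blister_wx eta n A L t) with
    (L * eta * cutoff n t - 9 * A ^ 2 * ((t * (1 - t)) ^ 4 * (1 - 2 * t) ^ 2) / (2 * L))
    by (unfold blister_wx, blister_ux, Rsqr; field; auto).
  apply derivable_pt_lim_minus.
  - apply derivable_pt_lim_scal, derivable_cutoff_primitive.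
  - apply derivable_pt_lim_div_scal, derivable_pt_lim_scal, derivable_ux_sq_primitive.
Qed.

Lemma blister_u_ends : vanishes_at_ends (blister_u A).
Proof. split; unfold blister_u; ring. Qed.

Lemma blister_ux_ends : vanishes_at_ends (blister_ux A L).
Proof. split; unfold blister_ux, Rdiv; ring. Qed.

Lemma blister_uxx_ends : vanishes_at_ends (blister_uxx A L).
Proof. split; unfold blister_uxx, Rdiv; ring. Qed.

Lemma blister_wx_ends : vanishes_at_ends (blister_wx eta n A L).
Proof.
  destruct blister_ux_ends as [Ux0 Ux1].
  split; unfold blister_wx, cutoff; [rewrite Ux0 | rewrite Ux1].
  - replace (1 - 2 * 0) with 1 by ring. rewrite pow1, Rsqr_0. ring.
  - replace (1 - 2 * 1) with (-1) by ring. rewrite pow_1_even, Rsqr_0. ring.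
Qed.

Lemma continuity_blister_wx : continuity (blister_wx eta n A L).
Proof. unfold blister_wx, cutoff, blister_ux, Rsqr. reg. Qed.

Lemma continuity_blister_uxx : continuity (blister_uxx A L).
Proof. unfold blister_uxx. reg. Qed.

Lemma is_RInt_blister_strain :
  is_RInt (fun t => Rsqr (blister_wx eta n A L t + / 2 * Rsqr (blister_ux A L t) - eta)) 0 1
    (eta ^ 2 / (4 * INR n + 1)).
Proof.
  set (F := fun t => - eta ^ 2 * (1 - 2 * t) ^ S (2 * (2 * n)) / (2 * INR (S (2 * (2 * n))))).
  assert (HD : forall t, is_derive F t (eta ^ 2 * (1 - 2 * t) ^ (2 * (2 * n)))).
  { intros t. unfold F. remember (S (2 * (2 * n))) as m eqn:Hm.
    assert (0 < INR m) by (subst; apply lt_0_INR; lia).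
    auto_derive; [lra |].
    replace (Init.Nat.pred m) with (2 * (2 * n))%nat by (subst; reflexivity).
    replace (1 + - (2 * t)) with (1 - 2 * t) by ring.
    field. lra. }
  assert (HC : forall t, continuous (fun t => eta ^ 2 * (1 - 2 * t) ^ (2 * (2 * n))) t).
  { intros t. apply continuity_pt_filterlim. reg. }
  assert (Hstrain : forall t,
    Rsqr (blister_wx eta n A L t + / 2 * Rsqr (blister_ux A L t) - eta)
    = eta ^ 2 * (1 - 2 * t) ^ (2 * (2 * n))).
  { intros t. unfold blister_wx, cutoff.
    replace (2 * (2 * n))%nat with (2 * n + 2 * n)%nat by lia.
    rewrite pow_add. unfold Rsqr. ring. }
  apply (is_RInt_ext_R (fun t => eta ^ 2 * (1 - 2 * t) ^ (2 * (2 * n)))).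
  { intros t. now rewrite Hstrain. }
  replace (eta ^ 2 / (4 * INR n + 1)) with (F 1 - F 0).
  { exact (is_RInt_derive F _ 0 1 (fun t _ => HD t) (fun t _ => HC t)). }
  unfold F. replace (1 - 2 * 1) with (-1) by ring. replace (1 - 2 * 0) with 1 by ring.
  rewrite pow_1_odd, pow1, S_INR, !mult_INR.
  assert (Hn := pos_INR n). change (INR 2) with 2. field. lra.
Qed.

Lemma is_RInt_blister_bending :
  is_RInt (fun t => Rsqr (blister_uxx A L t)) 0 1 (A ^ 2 / (L * L) ^ 2 * (2 / 35)).
Proof.
  set (F := fun t => A ^ 2 / (L * L) ^ 2 *
    (12 * t ^ 3 - 108 * t ^ 4 + 2016 / 5 * t ^ 5 - 780 * t ^ 6 + 5760 / 7 * t ^ 7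
     - 450 * t ^ 8 + 100 * t ^ 9)).
  assert (HD : forall t, is_derive F t (Rsqr (blister_uxx A L t))).
  { intros t. unfold F, blister_uxx, Rsqr. auto_derive; auto. field. auto. }
  assert (HC : forall t, continuous (fun t => Rsqr (blister_uxx A L t)) t).
  { intros t. apply continuity_pt_filterlim. unfold blister_uxx, Rsqr. reg. }
  replace (A ^ 2 / (L * L) ^ 2 * (2 / 35)) with (F 1 - F 0).
  { exact (is_RInt_derive F _ 0 1 (fun t _ => HD t) (fun t _ => HC t)). }
  unfold F. field. auto.
Qed.

End BlisterProfiles.

Lemma blister_amplitude_sq eta n L : 0 <= eta ->
  blister_amplitude eta n L ^ 2 = 1540 * L ^ 2 * eta * (2 * INR n / (2 * INR n + 1)).
Proof.
  intros He. unfold blister_amplitude. rewrite <- Rsqr_pow2. apply Rsqr_sqrt.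
  assert (Hn := pos_INR n).
  assert (Hq : 0 <= 2 * INR n / (2 * INR n + 1)) by (apply Rdiv_le_0_compat; lra).
  assert (HL2 := pow2_ge_0 L).
  apply Rmult_le_pos; [| exact Hq]. nra.
Qed.

Lemma blister_w_ends eta n L : 0 <= eta -> L <> 0 ->
  vanishes_at_ends (blister_w eta n (blister_amplitude eta n L) L).
Proof.
  intros He HL. assert (Hn := pos_INR n).
  split; unfold blister_w, cutoff_primitive, ux_sq_primitive.
  - replace (1 - 2 * 0) with 1 by ring. rewrite pow1. field. split; [auto | lra].
  - replace (1 - 2 * 1) with (-1) by ring.
    rewrite pow_1_odd, blister_amplitude_sq by auto. field. split; [lra | auto].
Qed.

Lemma flat_configuration am h as_ eta theta : 0 < theta < 1 ->
  exists (w wx u ux uxx : R -> R) (Om : R -> Prop),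
    admissible theta w wx u ux uxx Om /\
    energy_value am h as_ eta w wx u ux uxx Om (am * eta ^ 2 * h).
Proof.
  intros Htheta. set (Z := fun _ : R => 0).
  assert (Zends : vanishes_at_ends Z) by now split.
  assert (Zderiv : forall t, derivable_pt_lim Z t ((1 - theta) * Z t)).
  { intros t. unfold Z. rewrite Rmult_0_r. apply derivable_pt_lim_const. }
  assert (Zcont : continuity Z) by (intros t; apply continuity_pt_const; now intros ? ?).
  do 6 eexists. split.
  - apply (admissible_laid_profiles theta Z Z Z Z Z); auto. intros; unfold Z; lra.
  - replace (am * eta ^ 2 * h)
      with (am * h * (theta * eta ^ 2 + (1 - theta) * eta ^ 2) + h ^ 3 * ((1 - theta) * 0))
      by ring.
    apply (energy_value_laid_profiles theta Z Z Z Z Z); auto.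
    + assert (H := is_RInt_constR 0 1 (eta ^ 2)). rewrite Rminus_0_r, Rmult_1_l in H.
      revert H. apply is_RInt_ext_R. intros t. unfold Z, Rsqr. ring.
    + apply (is_RInt_ext_R (fun _ => 0)), is_RInt_0. intros t. unfold Z, Rsqr. ring.
Qed.

(* [88 = 1540 * (2 / 35)], where [2 / 35] is the integral of the square of
   [6 t - 36 t^2 + 60 t^3 - 30 t^4]. *)
Lemma blister_energy_le am h eta theta n :
  0 <= am -> 0 <= h -> 0 < eta -> 0 < theta < 1 ->
  am * h * (theta * eta ^ 2 + (1 - theta) * (eta ^ 2 / (4 * INR n + 1)))
  + h ^ 3 * ((1 - theta) * (blister_amplitude eta n (1 - theta) ^ 2
                             / ((1 - theta) * (1 - theta)) ^ 2 * (2 / 35)))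
  <= (am * eta ^ 2 * theta + 88 * (h ^ 2 * eta / (1 - theta))) * h
     + am * h * eta ^ 2 / (4 * INR n + 1).
Proof.
  intros Ham Hh Heta Htheta.
  rewrite blister_amplitude_sq by lra.
  assert (Hn := pos_INR n).
  set (L := 1 - theta); assert (HL : L <> 0) by (unfold L; lra).
  set (q := 2 * INR n / (2 * INR n + 1)).
  assert (Hq : 0 <= q <= 1) by (split; [apply Rdiv_le_0_compat | apply Rle_div_l]; lra).
  set (X := eta ^ 2 / (4 * INR n + 1)).
  assert (HX : 0 <= X) by (apply Rdiv_le_0_compat; nra).
  assert (Hbend : h ^ 3 * (L * (1540 * L ^ 2 * eta * q / (L * L) ^ 2 * (2 / 35)))
                  = 88 * (h ^ 2 * eta / L) * h * q) by (field; auto).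
  assert (HK : 0 <= 88 * (h ^ 2 * eta / L) * h).
  { apply Rmult_le_pos; [| lra]. apply Rmult_le_pos; [lra |].
    apply Rdiv_le_0_compat; [nra | unfold L; lra]. }
  replace (am * h * eta ^ 2 / (4 * INR n + 1)) with (am * h * X) by (unfold X; field; lra).
  rewrite Hbend.
  assert (0 <= am * h * X * theta).
  { apply Rmult_le_pos; [apply Rmult_le_pos; [nra | exact HX] | lra]. }
  assert (0 <= 88 * (h ^ 2 * eta / L) * h * (1 - q)) by (apply Rmult_le_pos; lra).
  assert (HLt : L = 1 - theta) by reflexivity.
  set (D := h ^ 2 * eta / L) in *. clearbody D X q L. subst L. nra.
Qed.

Lemma blister_configuration am h as_ eta theta n :
  0 <= am -> 0 <= h -> 0 < eta -> 0 < theta < 1 ->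
  exists (w wx u ux uxx : R -> R) (Om : R -> Prop) (E : R),
    admissible theta w wx u ux uxx Om /\
    energy_value am h as_ eta w wx u ux uxx Om E /\
    E <= (am * eta ^ 2 * theta + 88 * (h ^ 2 * eta / (1 - theta))) * h
         + am * h * eta ^ 2 / (4 * INR n + 1).
Proof.
  intros Ham Hh Heta Htheta.
  set (L := 1 - theta); assert (HL : L <> 0) by (unfold L; lra).
  set (A := blister_amplitude eta n L).
  assert (HA : 0 <= A) by apply sqrt_pos.
  assert (Wends : vanishes_at_ends (blister_w eta n A L)) by (apply blister_w_ends; lra).
  do 7 eexists. split; [| split].
  - apply (admissible_laid_profiles theta (blister_w eta n A L) (blister_wx eta n A L)
             (blister_u A) (blister_ux A L) (blister_uxx A L));
      auto using blister_wx_ends, blister_u_ends, blister_ux_ends, blister_uxx_ends,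
        derivable_blister_w, derivable_blister_u, derivable_blister_ux,
        continuity_blister_wx, continuity_blister_uxx.
    intros t Ht. unfold blister_u. apply Rmult_le_pos, pow_le; [exact HA | nra].
  - apply energy_value_laid_profiles;
      auto using blister_wx_ends, blister_ux_ends, blister_uxx_ends,
        is_RInt_blister_strain, is_RInt_blister_bending.
  - apply blister_energy_le; auto.
Qed.

Lemma exists_div_4n1_le X eps : 0 < eps -> exists n : nat, X / (4 * INR n + 1) <= eps.
Proof.
  intros Heps. destruct (INR_archimed eps X Heps) as [n Hn]. exists n.
  assert (Hn0 := pos_INR n).
  apply Rle_div_l; nra.
Qed.

Theorem theorem1 :
  exists K2 : R, 0 < K2 /\
    forall am theta h as_ eta : R,
      0 < am -> 0 < theta -> theta < 1 -> 0 < h -> 0 < as_ -> 0 < eta ->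
      forall eps : R, 0 < eps ->
        exists (w wx u ux uxx : R -> R) (Om : R -> Prop) (E : R),
          admissible theta w wx u ux uxx Om /\
          energy_value am h as_ eta w wx u ux uxx Om E /\
          E <= Rmin (am * eta ^ 2)
                    (am * eta ^ 2 * theta + K2 * (h ^ 2 * eta / (1 - theta))) * h
               + eps.
Proof.
  exists 88. split; [lra |].
  intros am theta h as_ eta Ham Htheta0 Htheta1 Hh Has Heta eps Heps.
  destruct (Rle_or_lt (am * eta ^ 2)
              (am * eta ^ 2 * theta + 88 * (h ^ 2 * eta / (1 - theta)))) as [Hflat | Hblister].
  - destruct (flat_configuration am h as_ eta theta) as (w & wx & u & ux & uxx & Om & Hadm & HE);
      [lra |].
    exists w, wx, u, ux, uxx, Om, (am * eta ^ 2 * h). rewrite Rmin_left by exact Hflat.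
    split; [exact Hadm | split; [exact HE | lra]].
  - destruct (exists_div_4n1_le (am * h * eta ^ 2) eps Heps) as [n Hn].
    destruct (blister_configuration am h as_ eta theta n)
      as (w & wx & u & ux & uxx & Om & E & Hadm & HE & Hbound); try lra.
    exists w, wx, u, ux, uxx, Om, E. rewrite Rmin_right by lra.
    split; [exact Hadm | split; [exact HE | lra]].
Qed.
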